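(* Let $(\mathbb{K},\partial)$ be a differential field whose field of constants $C$ is algebraically closed of characteristic zero, let $L\in\mathbb{K}[\partial]$ be of order $n$ in normal form, and let $\mathcal{G}=\{G_0=1,G_1,\ldots,G_{t-1}\}$ be a Goodearl basis of $\mathcal{C}(L)$ as a $C[L]$-module. Then the quotient ring $\mathbb{K}[\Gamma]:=\mathbb{K}[\lambda,\mu_1,\ldots,\mu_{t-1}]/[\mathrm{BC}(L)]$ is a differential integral domain.
   Context: $L=\partial^n+u_{n-2}\partial^{n-2}+\dots+u_0$. $\mathcal{C}(L)=\{A\in\mathbb{K}[\partial]:LA=AL\}$. A Goodearl basis is a $C[L]$-module basis $\{G_0=1,\ldots,G_{t-1}\}$ of $\mathcal{C}(L)$ in which each $G_k$ has minimal order among $Q\in\mathcal{C}(L)$ with $\mathrm{ord}(Q)\equiv\mathrm{ord}(G_k)\pmod n$ and the classes $\mathrm{ord}(G_k)\bmod n$ are pairwise distinct and exhaust the classes mod $n$ of orders of elements of $\mathcal{C}(L)$. $\mathrm{BC}(L)\subset C[\lambda,\mu_1,\ldots,\mu_{t-1}]$ is the kernel of the $C$-algebra map $\phi_L$: $\lambda\mapsto L$, $\mu_i\mapsto G_i$ (the Burchnall–Chaundy ideal). $\mathbb{K}[\lambda,\mu_1,\ldots,\mu_{t-1}]$ is a differential ring with derivation extending $\partial$ on coefficients and $\partial(\lambda)=\partial(\mu_i)=0$; $[\mathrm{BC}(L)]$ is the differential ideal generated by $\mathrm{BC}(L)$ in it, and the quotient carries the induced derivation. *)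

From HB Require Import structures.
From mathcomp Require Import all_boot all_order all_algebra.
From mathcomp Require Import mpoly.
Set Implicit Arguments. Unset Strict Implicit. Unset Printing Implicit Defensive.
Import Order.TTheory GRing.Theory.
Local Open Scope ring_scope.

Definition is_derivation (K : fieldType) (d : K -> K) : Prop :=
  (forall x y, d (x + y) = d x + d y) /\ (forall x y, d (x * y) = d x * y + x * d y).

Definition is_const (K : fieldType) (d : K -> K) (x : K) : Prop := d x = 0.

Definition const_alg_closed (K : fieldType) (d : K -> K) : Prop :=
  forall p : {poly K}, (forall i, is_const d p`_i) -> (1 < size p)%N ->
    exists x, is_const d x /\ root p x.

(* characteristic zero (of K, equivalently of its subfield C) *)
Definition char_zero (K : fieldType) : Prop := forall m : nat, (m.+1)%:R != 0 :> K.

(* An operator sum_i a_i ∂^i is represented by the polynomial sum_i a_i X^i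
   (coefficients on the left).  Multiplication uses
   (a ∂^i)(b ∂^j) = sum_k C(i,k) a d^k(b) ∂^(i+j-k). *)
Definition dmul (K : fieldType) (d : K -> K) (P Q : {poly K}) : {poly K} :=
  \sum_(i < size P) \sum_(j < size Q) \sum_(k < i.+1)
     ((P`_i * iter k d Q`_j) *+ 'C(i, k)) *: 'X^(i + j - k).

Definition dpow (K : fieldType) (d : K -> K) (A : {poly K}) (k : nat) : {poly K} :=
  iter k (dmul d A) 1.

Definition ord_op (K : fieldType) (P : {poly K}) : nat := (size P).-1.

Definition normal_form (K : fieldType) (n : nat) (L : {poly K}) : Prop :=
  size L = n.+1 /\ lead_coef L = 1 /\ L`_n.-1 = 0.

Definition in_centralizer (K : fieldType) (d : K -> K) (L A : {poly K}) : Prop :=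
  dmul d L A = dmul d A L.

Definition poly_in_L (K : fieldType) (d : K -> K) (L : {poly K}) (q : {poly K}) : {poly K} :=
  \sum_(i < size q) q`_i *: dpow d L i.

Definition const_poly (K : fieldType) (d : K -> K) (q : {poly K}) : Prop :=
  forall i, is_const d q`_i.

(* {G_0,...,G_{t-1}} (G : nat -> {poly K}, only i < t used) is a Goodearl basis
   of C(L) as a C[L]-module. *)
Definition goodearl_basis (K : fieldType) (d : K -> K) (n : nat) (L : {poly K})
    (t : nat) (G : nat -> {poly K}) : Prop :=
  (0 < t)%N /\ G 0%N = 1 /\
      (forall i, (i < t)%N -> in_centralizer d L (G i)) /\
      (forall q : nat -> {poly K}, (forall i, (i < t)%N -> const_poly d (q i)) ->
         \sum_(i < t) dmul d (poly_in_L d L (q i)) (G i) = 0 ->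
         forall i, (i < t)%N -> q i = 0) /\
      (forall A, in_centralizer d L A ->
         exists q : nat -> {poly K}, (forall i, (i < t)%N -> const_poly d (q i)) /\
           A = \sum_(i < t) dmul d (poly_in_L d L (q i)) (G i)) /\
      (forall k, (k < t)%N -> forall Q, in_centralizer d L Q -> Q != 0 ->
         ord_op Q = ord_op (G k) %[mod n] -> (ord_op (G k) <= ord_op Q)%N) /\
      (forall i j, (i < t)%N -> (j < t)%N ->
         ord_op (G i) = ord_op (G j) %[mod n] -> i = j) /\
      (forall Q, in_centralizer d L Q -> Q != 0 ->
         exists2 k, (k < t)%N & ord_op Q = ord_op (G k) %[mod n]).

(* Variables of {mpoly K[t]}: variable 0 is λ, variable i (1 <= i < t) is μ_i. *)
Definition bc_var (K : fieldType) (L : {poly K}) (t : nat) (G : nat -> {poly K})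
    (i : 'I_t) : {poly K} := if val i == 0%N then L else G (val i).

(* phi_L : λ ↦ L, μ_i ↦ G_i  (products taken in variable order) *)
Definition phiL (K : fieldType) (d : K -> K) (L : {poly K}) (t : nat)
    (G : nat -> {poly K}) (p : {mpoly K[t]}) : {poly K} :=
  \sum_(m <- msupp p)
     p@_m *: \big[dmul d/1]_(i < t) dpow d (bc_var L G i) (m i).

Definition in_BC (K : fieldType) (d : K -> K) (L : {poly K}) (t : nat)
    (G : nat -> {poly K}) (p : {mpoly K[t]}) : Prop :=
  (forall m, is_const d p@_m) /\ phiL d L G p = 0.

Definition mderivK (K : fieldType) (d : K -> K) (t : nat) (p : {mpoly K[t]}) : {mpoly K[t]} :=
  \sum_(m <- msupp p) d p@_m *: 'X_[m].

Definition is_ideal (K : fieldType) (t : nat) (I : {mpoly K[t]} -> Prop) : Prop :=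
  [/\ I 0, (forall a b, I a -> I b -> I (a + b)) & (forall r a, I a -> I (r * a))].

Definition diff_ideal_gen (K : fieldType) (d : K -> K) (t : nat)
    (S : {mpoly K[t]} -> Prop) (p : {mpoly K[t]}) : Prop :=
  forall I : {mpoly K[t]} -> Prop, is_ideal I -> (forall q, I q -> I (mderivK d q)) ->
    (forall q, S q -> I q) -> I p.

From HB Require Import structures.
From mathcomp Require Import all_boot all_order all_algebra.
From mathcomp Require Import mpoly.
From mathcomp Require Import zify.
Set Implicit Arguments. Unset Strict Implicit. Unset Printing Implicit Defensive.
Import Order.TTheory GRing.Theory.
Local Open Scope ring_scope.

(* K[∂] is modelled on {poly K} with the product dmul.  Its ring laws follow
   from the action of K[∂] on K[y] through the derivation extending d with
   y' = 1, which is faithful since char K = 0.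
   Schur's theorem: leading coefficients of elements of C(L) are constants;
   if the order of P in C(L) generates the classes mod n of orders in C(L),
   every element of C(L) agrees with an element of C[L, P] up to bounded
   order, and an order count shows that whatever commutes with P commutes
   with all of C(L).  So C(L) is commutative.
   Hence the K-linear extension φ of φ_L is multiplicative on monomials and
   ker φ is an ideal.  Modulo the K-span of BC(L) every polynomial reduces to
   Σ b_{s,k} λ^k μ_s, because the G_s generate C(L) over C[L]; as the
   operators A L^k G_s have pairwise distinct orders, φ(a Σ b_{s,k} λ^k μ_s)
   = 0 with φ(a) ≠ 0 forces b = 0.  Thus ker φ is prime and is the K-span of
   BC(L), which is stable under the derivation; so ker φ = [BC(L)]. *)

Section LinearCombination.
Variables (R : nzRingType) (V : lmodType R) (T : nat -> V).

Definition pcomb (p : {poly R}) : V := \sum_(i < size p) p`_i *: T i.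

Lemma pcomb_widen (p : {poly R}) N : (size p <= N)%N -> pcomb p = \sum_(i < N) p`_i *: T i.
Proof.
move=> le_pN; rewrite /pcomb (big_ord_widen N (fun i => p`_i *: T i)) // big_mkcond.
by apply: eq_bigr => i _; case: ltnP => // /(nth_default 0) ->; rewrite scale0r.
Qed.

Lemma pcomb_is_linear : linear pcomb.
Proof.
move=> c p q; pose N := (size (c *: p + q)%R + size p + size q)%N.
rewrite !(@pcomb_widen _ N) /N; try lia.
rewrite scaler_sumr -big_split; apply: eq_bigr => i _.
by rewrite coefD coefZ scalerDl scalerA.
Qed.

HB.instance Definition _ := GRing.isLinear.Build R {poly R} V *:%R pcomb pcomb_is_linear.

Lemma pcombZXn c e : pcomb (c *: 'X^e) = c *: T e.
Proof.
rewrite (@pcomb_widen _ e.+1) ?(leq_trans (size_scale_leq _ _)) ?size_polyXn //.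
rewrite big_ord_recr /= big1 => [|i _]; rewrite coefZ coefXn ?eqxx ?mulr1 ?add0r //.
by rewrite ltn_eqF // mulr0 scale0r.
Qed.

End LinearCombination.

Lemma size_sub_same_lead (R : nzRingType) (p q : {poly R}) :
  p != 0 -> size p = size q -> lead_coef p = lead_coef q -> (size (p - q)%R < size p)%N.
Proof.
rewrite -size_poly_gt0 => p0 spq lpq; rewrite -(prednK p0) ltnS.
apply/leq_sizeP => j le_j; rewrite coefB; have [->|ne_j] := eqVneq j (size p).-1.
  by rewrite -/(lead_coef p) lpq /lead_coef spq subrr.
by rewrite !nth_default ?subrr // -?spq; move: le_j ne_j p0; case: (size p) => //=; lia.
Qed.

Lemma distinct_size_free (R : idomainType) (I : finType) (T : I -> {poly R}) (g : I -> R) :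
  (forall i, T i != 0) -> injective (fun i => size (T i)) ->
  \sum_i g i *: T i = 0 -> forall i, g i = 0.
Proof.
move=> T0 Tinj sum0 i; apply/eqP/negPn/negP => gi0.
have [j gj0 j_max] := @arg_maxnP I i (fun i => g i != 0) (fun i => size (T i)) gi0.
have /eqP := congr1 (fun p : {poly R} => p`_(size (T j)).-1) sum0.
rewrite coef_sum coef0 (bigD1 j) //= big1 ?addr0 => [|k kj].
  by rewrite coefZ -lead_coefE mulf_eq0 lead_coef_eq0 (negbTE gj0) (negbTE (T0 j)).
rewrite coefZ; have [->|gk0] := eqVneq (g k) 0; first by rewrite mul0r.
rewrite nth_default ?mulr0 //.
have : (size (T k) <= size (T j))%N := j_max k gk0.
rewrite leq_eqVlt => /orP[/eqP/Tinj kj_eq|lt_kj]; first by rewrite kj_eq eqxx in kj.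
by rewrite -ltnS prednK // (leq_ltn_trans _ lt_kj).
Qed.

(** * The ring K[∂] of differential operators *)

Section DifferentialField.
Variables (K : fieldType) (d : K -> K).
Hypotheses (derd : is_derivation d) (charK : char_zero K).

Lemma der_is_zmod_morphism : zmod_morphism d.
Proof. by case: derd => dD _ x y; apply: (addIr (d y)); rewrite -dD !subrK. Qed.

HB.instance Definition _ := GRing.isZmodMorphism.Build K K d der_is_zmod_morphism.

Lemma derM x y : d (x * y) = d x * y + x * d y.
Proof. by case: derd. Qed.

Lemma der1 : d 1 = 0.
Proof.
have := derM 1 1; rewrite !mulr1 mul1r => d1E.
by apply: (addrI (d 1)); rewrite -d1E addr0.
Qed.

Lemma der_nat m : d m%:R = 0.
Proof. by elim: m => [|m IHm]; rewrite ?raddf0 // mulrS raddfD /= der1 IHm addr0. Qed.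

Lemma iter_der_nat k m : iter k.+1 d m%:R = 0.
Proof. by elim: k => [|k IHk]; [exact: der_nat | rewrite iterS IHk raddf0]. Qed.

Lemma iter_der0 k : iter k d 0 = 0.
Proof. by elim: k => // k IHk; rewrite iterS IHk raddf0. Qed.

Lemma der_constM x y : d x = 0 -> d y = 0 -> d (x * y) = 0.
Proof. by move=> dx dy; rewrite derM dx dy mulr0 mul0r addr0. Qed.

Lemma der_constV x : d x = 0 -> d x^-1 = 0.
Proof.
move=> dx; have [->|x0] := eqVneq x 0; first by rewrite invr0 raddf0.
have := derM x x^-1; rewrite mulfV // der1 dx mul0r add0r => /esym/eqP.
by rewrite mulf_eq0 (negbTE x0) => /eqP.
Qed.

Lemma der_constX x k : d x = 0 -> d (x ^+ k) = 0.
Proof. by move=> dx; elim: k => [|k IHk]; rewrite ?der1 // exprS der_constM. Qed.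

(* Here {poly K} stands for K[y], on which K[∂] acts through opact below. *)
Definition Dy (f : {poly K}) : {poly K} := map_poly d f + f^`().

Lemma Dy_is_zmod_morphism : zmod_morphism Dy.
Proof. by move=> f g; rewrite /Dy !raddfB /= addrACA opprD. Qed.

HB.instance Definition _ := GRing.isZmodMorphism.Build {poly K} {poly K} Dy
  Dy_is_zmod_morphism.

Lemma DyZ c f : Dy (c *: f) = d c *: f + c *: Dy f.
Proof.
rewrite /Dy derivZ scalerDr addrA; congr (_ + _); apply/polyP => i.
by rewrite coefD !coefZ !coef_map_id0 ?raddf0 // coefZ derM.
Qed.

Lemma DyXn k : Dy 'X^k = 'X^(k.-1) *+ k.
Proof.
rewrite /Dy derivXn [map_poly d _](_ : _ = 0) ?add0r //.
by apply/polyP => i; rewrite coef_map_id0 ?raddf0 // coefXn der_nat coef0.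
Qed.

Lemma iter_DyXn i k : iter i Dy 'X^k = 'X^(k - i) *+ (k ^_ i).
Proof.
elim: i => [|i IHi]; first by rewrite subn0 ffactn0.
by rewrite iterS IHi raddfMn /= DyXn -mulrnA subnS ffactnSr mulnC.
Qed.

Lemma iter_DyD k : {morph iter k Dy : f g / f + g}.
Proof. by elim: k => // k IHk f g; rewrite !iterS IHk raddfD. Qed.

Lemma iter_Dy0 k : iter k Dy 0 = 0.
Proof. by elim: k => // k IHk; rewrite iterS IHk raddf0. Qed.

Lemma iter_Dy_sum k I (r : seq I) (P : pred I) (F : I -> {poly K}) :
  iter k Dy (\sum_(i <- r | P i) F i) = \sum_(i <- r | P i) iter k Dy (F i).
Proof. exact: (big_morph (iter k Dy) (iter_DyD k) (iter_Dy0 k)). Qed.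

Lemma iter_DyZ_const k c f : d c = 0 -> iter k Dy (c *: f) = c *: iter k Dy f.
Proof. by move=> dc; elim: k => // k IHk; rewrite !iterS IHk DyZ dc scale0r add0r. Qed.

Lemma iter_DyZ i c f :
  iter i Dy (c *: f) =
  \sum_(k < i.+1) (iter k d c *: iter (i - k) Dy f) *+ 'C(i, k).
Proof.
elim: i => [|i IHi]; first by rewrite big_ord1 subn0 bin0.
pose F k := iter k d c *: iter (i.+1 - k) Dy f.
have DyF (k : 'I_i.+1) :
    Dy ((iter k d c *: iter (i - k) Dy f) *+ 'C(i, k)) = (F k.+1 + F k) *+ 'C(i, k).
  by rewrite raddfMn /= DyZ /F subSS -iterS subSn // -ltnS.
rewrite iterS IHi raddf_sum (eq_bigr _ (fun k _ => DyF k)).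
under eq_bigr do rewrite mulrnDl.
rewrite big_split /= -/(\sum_(k < i.+2) F k *+ 'C(i.+1, k)) [RHS]big_ord_recl bin0 mulr1n.
rewrite [in RHS](eq_bigr (fun k : 'I_i.+1 => F k.+1 *+ 'C(i, k) + F k.+1 *+ 'C(i, k.+1)));
  last by move=> k _; rewrite /bump /= binS mulrnDr addrC.
rewrite big_split /= addrCA; congr (_ + _).
rewrite big_ord_recl bin0 mulr1n big_ord_recr /= bin_small // mulr0n addr0.
by congr (_ + _); apply: eq_bigr => k _; rewrite /bump.
Qed.

Implicit Types (P Q R A B f g : {poly K}).
Local Notation "P ** Q" := (dmul d P Q) (at level 40, left associativity).

Definition opact P f : {poly K} := pcomb (fun i => iter i Dy f) P.

Lemma opactD P Q f : opact (P + Q) f = opact P f + opact Q f.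
Proof. exact: linearD. Qed.

Lemma opactZ c P f : opact (c *: P) f = c *: opact P f.
Proof. exact: linearZ. Qed.

Lemma opact0 f : opact 0 f = 0.
Proof. exact: linear0. Qed.

Lemma opact_sum I (r : seq I) (p : pred I) (F : I -> {poly K}) f :
  opact (\sum_(i <- r | p i) F i) f = \sum_(i <- r | p i) opact (F i) f.
Proof. exact: linear_sum. Qed.

Lemma opact1 f : opact 1 f = f.
Proof. by have := pcombZXn (fun i => iter i Dy f) 1 0; rewrite scale1r expr0 scale1r. Qed.

Lemma opact_addr P f g : opact P (f + g) = opact P f + opact P g.
Proof.
by rewrite /opact /pcomb -big_split; apply: eq_bigr => i _; rewrite iter_DyD scalerDr.
Qed.

Lemma opact_scaler_const P c f : d c = 0 -> opact P (c *: f) = c *: opact P f.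
Proof.
move=> dc; rewrite /opact /pcomb scaler_sumr; apply: eq_bigr => i _.
by rewrite iter_DyZ_const // !scalerA mulrC.
Qed.

Lemma opact_dmul P Q f : opact (P ** Q) f = opact P (opact Q f).
Proof.
rewrite /dmul opact_sum [RHS]/opact /pcomb; apply: eq_bigr => i _.
rewrite opact_sum iter_Dy_sum scaler_sumr; apply: eq_bigr => j _.
rewrite opact_sum iter_DyZ scaler_sumr; apply: eq_bigr => k _.
rewrite /opact pcombZXn -iterD addnBAC; last by rewrite -ltnS.
by rewrite scalerMnr scalerA -scalerMnl scalerMnr.
Qed.

Lemma natr_fact_neq0 k : k`!%:R != 0 :> K.
Proof. by rewrite -(prednK (fact_gt0 k)); apply: charK. Qed.

Lemma opact_Xn P k : (forall i, (i < k)%N -> P`_i = 0) -> opact P 'X^k = (P`_k *+ k`!)%:P.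
Proof.
move=> Plow; pose N := maxn (size P) k.+1.
have kN : (k < N)%N by rewrite leq_max ltnSn orbT.
rewrite /opact (@pcomb_widen _ _ _ _ N) ?leq_maxl // (bigD1 (Ordinal kN)) //= big1 ?addr0.
  by rewrite iter_DyXn subnn expr0 ffactnn -scalerMnr alg_polyC polyCMn.
move=> i /= /eqP/val_eqP /= ik; rewrite iter_DyXn.
have [lt_ik|lt_ki] := ltnP i k; first by rewrite Plow // scale0r.
by rewrite ffact_small ?mulr0n ?scaler0 // ltn_neqAle eq_sym ik.
Qed.

Lemma opact_faithful P : (forall f, opact P f = 0) -> P = 0.
Proof.
move=> P0; apply/polyP => k; rewrite coef0; elim/ltn_ind: k => k IHk.
have /eqP := P0 'X^k; rewrite opact_Xn // polyC_eq0 -mulr_natr mulf_eq0.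
by rewrite (negbTE (natr_fact_neq0 k)) orbF => /eqP.
Qed.

Lemma opact_inj P Q : (forall f, opact P f = opact Q f) -> P = Q.
Proof.
move=> PQ; apply/eqP; rewrite -subr_eq0; apply/eqP/opact_faithful => f.
by rewrite opactD -scaleN1r opactZ PQ scaleN1r subrr.
Qed.

Lemma dmulA : associative (dmul d).
Proof. by move=> P Q R; apply: opact_inj => f; rewrite !opact_dmul. Qed.

Lemma dmul1r : right_id 1 (dmul d).
Proof. by move=> P; apply: opact_inj => f; rewrite opact_dmul opact1. Qed.

Lemma dmul1l : left_id 1 (dmul d).
Proof. by move=> P; apply: opact_inj => f; rewrite opact_dmul opact1. Qed.

HB.instance Definition _ := Monoid.isLaw.Build {poly K} 1 (dmul d) dmulA dmul1l dmul1r.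

Lemma dmulDl : left_distributive (dmul d) +%R.
Proof. by move=> P Q R; apply: opact_inj => f; rewrite opactD !opact_dmul opactD. Qed.

Lemma dmulDr : right_distributive (dmul d) +%R.
Proof.
by move=> P Q R; apply: opact_inj => f; rewrite opactD !opact_dmul opactD opact_addr.
Qed.

Lemma dmulZl c P Q : (c *: P) ** Q = c *: (P ** Q).
Proof. by apply: opact_inj => f; rewrite opactZ !opact_dmul opactZ. Qed.

Lemma dmulZr_const c P Q : d c = 0 -> P ** (c *: Q) = c *: (P ** Q).
Proof.
by move=> dc; apply: opact_inj => f; rewrite opactZ !opact_dmul opactZ opact_scaler_const.
Qed.

Lemma dmul0l P : 0 ** P = 0.
Proof. by apply: opact_inj => f; rewrite opact_dmul !opact0. Qed.

Lemma dmul0r P : P ** 0 = 0.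
Proof. by rewrite -[0](scale0r 0) dmulZr_const ?raddf0 // scale0r. Qed.

Lemma dmulNl P Q : (- P) ** Q = - (P ** Q).
Proof. by rewrite -scaleN1r dmulZl scaleN1r. Qed.

Lemma dmulNr P Q : P ** (- Q) = - (P ** Q).
Proof. by rewrite -scaleN1r dmulZr_const ?scaleN1r // raddfN /= der1 oppr0. Qed.

Lemma dmulBl P Q R : (P - Q) ** R = P ** R - Q ** R.
Proof. by rewrite dmulDl dmulNl. Qed.

Lemma dmulBr P Q R : P ** (Q - R) = P ** Q - P ** R.
Proof. by rewrite dmulDr dmulNr. Qed.

Lemma dmul_suml I (r : seq I) (p : pred I) (F : I -> {poly K}) Q :
  (\sum_(i <- r | p i) F i) ** Q = \sum_(i <- r | p i) F i ** Q.
Proof. exact: (big_morph (dmul d ^~ Q) (fun P R => dmulDl P R Q) (dmul0l Q)). Qed.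

Lemma dmulE P Q : P ** Q =
  \sum_(i < size P) \sum_(k < i.+1) (P`_i *+ 'C(i, k)) *: (map_poly (iter k d) Q * 'X^(i - k)).
Proof.
rewrite /dmul; apply: eq_bigr => i _; rewrite exchange_big /=; apply: eq_bigr => k _.
rewrite /map_poly poly_def mulr_suml scaler_sumr; apply: eq_bigr => j _.
by rewrite -scalerAl -exprD scalerA mulrnAl [(j + _)%N]addnC addnBAC // -ltnS.
Qed.

Lemma dmul_mul_expand P Q : P ** Q = P * Q +
  \sum_(i < size P) \sum_(k < i) (P`_i *+ 'C(i, k.+1)) *:
     (map_poly (iter k.+1 d) Q * 'X^(i - k.+1)).
Proof.
rewrite dmulE; under eq_bigr do rewrite big_ord_recl.
rewrite big_split /=; congr (_ + _).
rewrite -[in RHS](coefK P) poly_def mulr_suml; apply: eq_bigr => i _.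
by rewrite bin0 mulr1n subn0 map_poly_id // -scalerAl mulrC.
Qed.

Lemma size_dmul_sub_mul P Q : (size (P ** Q - P * Q)%R <= (size P + size Q).-2)%N.
Proof.
rewrite dmul_mul_expand addrC addKr.
apply: (leq_trans (size_sum _ _ _)); apply/bigmax_leqP => i _.
apply: (leq_trans (size_sum _ _ _)); apply/bigmax_leqP => k _.
rewrite (leq_trans (size_scale_leq _ _)) // (leq_trans (size_polyMleq _ _)) //.
have : (size (map_poly (iter k.+1 d) Q) <= size Q)%N by exact: size_poly.
by rewrite size_polyXn; have := ltn_ord i; have := ltn_ord k; lia.
Qed.

Lemma size_dmul_le P Q : (size (P ** Q) <= (size P + size Q).-1)%N.
Proof.
rewrite -[P ** Q](subrK (P * Q)); apply: (leq_trans (size_polyD _ _)).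
by rewrite geq_max size_polyMleq (leq_trans (size_dmul_sub_mul P Q)) ?leq_pred.
Qed.

Lemma size_dmul_sub_mul_lt P Q : P != 0 -> Q != 0 ->
  (size (P ** Q - P * Q)%R < size (P * Q)%R)%N.
Proof.
move=> P0 Q0; apply: (leq_ltn_trans (size_dmul_sub_mul P Q)); rewrite size_mul //.
by move: P0 Q0; rewrite -!size_poly_gt0; move: (size P) (size Q) => a b; lia.
Qed.

Lemma size_dmul P Q : P != 0 -> Q != 0 -> size (P ** Q) = (size P + size Q).-1.
Proof.
move=> P0 Q0.
by rewrite -[P ** Q](subrK (P * Q)) addrC size_polyDl ?size_dmul_sub_mul_lt ?size_mul.
Qed.

Lemma lead_coef_dmul P Q : lead_coef (P ** Q) = lead_coef P * lead_coef Q.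
Proof.
have [->|P0] := eqVneq P 0; first by rewrite dmul0l !lead_coef0 mul0r.
have [->|Q0] := eqVneq Q 0; first by rewrite dmul0r !lead_coef0 mulr0.
by rewrite -[P ** Q](subrK (P * Q)) addrC lead_coefDl ?size_dmul_sub_mul_lt ?lead_coefM.
Qed.

Lemma dmul_neq0 P Q : P != 0 -> Q != 0 -> P ** Q != 0.
Proof. by move=> P0 Q0; rewrite -lead_coef_eq0 lead_coef_dmul mulf_neq0 ?lead_coef_eq0. Qed.

Lemma dmulXn_r P e : P ** 'X^e = P * 'X^e.
Proof.
rewrite dmul_mul_expand big1 ?addr0 // => i _; apply: big1 => k _.
rewrite [map_poly _ _](_ : _ = 0) ?mul0r ?scaler0 //.
by apply/polyP => j; rewrite coef_map_id0 ?iter_der0 // coefXn iter_der_nat coef0.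
Qed.

Lemma coef_commXn A e m : size A = m.+1 ->
  ('X^(e.+1) ** A - A ** 'X^(e.+1))`_(e + m) = d A`_m *+ e.+1.
Proof.
move=> sA; rewrite dmulXn_r dmul_mul_expand (mulrC A) addrAC subrr add0r size_polyXn coef_sum.
rewrite big_ord_recr big1 /= => [|i _]; last first.
  by rewrite coefXn ltn_eqF // big1 ?coef0 // => k _; rewrite mul0rn scale0r.
rewrite add0r coefXn eqxx coef_sum big_ord_recl big1 /= => [|k _].
  rewrite addr0 bin1 coefZ coefMXn subn1 /= ltnNge leq_addr /= addKn.
  by rewrite coef_map_id0 ?iter_der0 // mulr_natl.
rewrite coefZ coefMXn; case: ifP => _; first by rewrite mulr0.
rewrite nth_default ?mulr0 // (leq_trans (size_poly _ _)) // sA.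
by have := ltn_ord k; rewrite /bump /=; lia.
Qed.

Section Commutation.
Variable X : {poly K}.
Local Notation cent := (in_centralizer d X).

Lemma cent0 : cent 0.
Proof. by rewrite /in_centralizer dmul0l dmul0r. Qed.

Lemma cent1 : cent 1.
Proof. by rewrite /in_centralizer dmul1l dmul1r. Qed.

Lemma centD A B : cent A -> cent B -> cent (A + B).
Proof. by rewrite /in_centralizer => XA XB; rewrite dmulDl dmulDr XA XB. Qed.

Lemma centN A : cent A -> cent (- A).
Proof. by rewrite /in_centralizer => XA; rewrite dmulNl dmulNr XA. Qed.

Lemma centB A B : cent A -> cent B -> cent (A - B).
Proof. by move=> XA XB; apply: centD => //; apply: centN. Qed.

Lemma centZ_const c A : d c = 0 -> cent A -> cent (c *: A).
Proof. by rewrite /in_centralizer => dc XA; rewrite dmulZr_const // dmulZl XA. Qed.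

Lemma centM A B : cent A -> cent B -> cent (A ** B).
Proof. by rewrite /in_centralizer => XA XB; rewrite dmulA XA -dmulA XB dmulA. Qed.

Lemma centX A k : cent A -> cent (dpow d A k).
Proof. by move=> XA; elim: k => [|k IHk]; [exact: cent1 | exact: centM]. Qed.

End Commutation.

Lemma dpowS A k : dpow d A k.+1 = A ** dpow d A k.
Proof. by []. Qed.

Lemma dpowD A a b : dpow d A (a + b) = dpow d A a ** dpow d A b.
Proof. by elim: a => [|a IHa]; rewrite ?dmul1l // addSn !dpowS IHa dmulA. Qed.

Lemma lead_coef_dpow A k : lead_coef (dpow d A k) = lead_coef A ^+ k.
Proof. by elim: k => [|k IHk]; rewrite ?lead_coef1 // dpowS lead_coef_dmul IHk exprS. Qed.

Lemma dpow_neq0 A k : A != 0 -> dpow d A k != 0.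
Proof. by move=> A0; elim: k => [|k IHk]; rewrite ?oner_neq0 // dpowS dmul_neq0. Qed.

Lemma size_ord_op P : P != 0 -> size P = (ord_op P).+1.
Proof. by rewrite -size_poly_gt0 => /prednK. Qed.

Lemma ord_dmul P Q : P != 0 -> Q != 0 -> ord_op (P ** Q) = (ord_op P + ord_op Q)%N.
Proof.
move=> P0 Q0; rewrite /ord_op size_dmul //.
by rewrite (size_ord_op P0) (size_ord_op Q0) addSn addnS.
Qed.

Lemma ord_dpow A k : A != 0 -> ord_op (dpow d A k) = (k * ord_op A)%N.
Proof.
move=> A0; elim: k => [|k IHk]; first by rewrite /ord_op size_poly1.
by rewrite dpowS ord_dmul ?dpow_neq0 // IHk mulSn.
Qed.

Section MderivK.
Variable t : nat.
Implicit Types (p q : {mpoly K[t]}) (m : 'X_{1..t}).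

Lemma mderivK_coef p m : (mderivK d p)@_m = d p@_m.
Proof.
rewrite /mderivK raddf_sum /=; have [pm|pm] := boolP (m \in msupp p).
  rewrite (bigD1_seq m pm (msupp_uniq p)) /= mcoeffZ mcoeffX eqxx mulr1 big1 ?addr0 //.
  by move=> u /negbTE um; rewrite mcoeffZ mcoeffX um mulr0.
rewrite memN_msupp_eq0 // raddf0 big_seq big1 // => u up; rewrite mcoeffZ mcoeffX.
by case: eqP => [um|]; [move: pm; rewrite -um up | rewrite mulr0].
Qed.

Lemma mderivKD p q : mderivK d (p + q) = mderivK d p + mderivK d q.
Proof. by apply/mpolyP => m; rewrite mcoeffD !mderivK_coef mcoeffD raddfD. Qed.

Lemma mderivKZ c p : mderivK d (c *: p) = d c *: p + c *: mderivK d p.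
Proof. by apply/mpolyP => m; rewrite mcoeffD !mcoeffZ !mderivK_coef mcoeffZ derM. Qed.

Lemma mderivK_const p : (forall m, d p@_m = 0) -> mderivK d p = 0.
Proof. by move=> dp; apply/mpolyP => m; rewrite mderivK_coef dp mcoeff0. Qed.

Lemma mderivK0 : mderivK d (0 : {mpoly K[t]}) = 0.
Proof. by rewrite /mderivK msupp0 big_nil. Qed.

End MderivK.

(** * Schur's theorem: the centralizer C(L) is commutative *)

Section Centralizer.
Variables (n : nat) (L : {poly K}).
Hypotheses (n_gt0 : (0 < n)%N) (Lnf : normal_form n L).
Local Notation cent := (in_centralizer d L).

Lemma normal_form_neq0 : L != 0.
Proof. by case: Lnf => sL _; rewrite -size_poly_eq0 sL. Qed.

Lemma normal_form_lead : lead_coef L = 1.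
Proof. by case: Lnf => _ []. Qed.

Lemma normal_form_ord : ord_op L = n.
Proof. by case: Lnf => sL _; rewrite /ord_op sL. Qed.

Lemma normal_form_split : exists2 L1 : {poly K}, (size L1 <= n.-1)%N & L = 'X^n + L1.
Proof.
case: Lnf => sL [lL cL]; exists (L - 'X^n); last by rewrite addrC subrK.
apply/leq_sizeP => j le_j; rewrite coefB coefXn.
case: (ltngtP j n) => [lt_jn|lt_nj|->]; rewrite ?mulr0n ?mulr1n ?subr0.
- by rewrite (_ : j = n.-1) //; lia.
- by rewrite nth_default // sL.
- by rewrite -lL /lead_coef sL subrr.
Qed.

(* The commutator [∂^n + L1, A] has order ord A + n - 1, with top coefficient
   n (lead_coef A)'; here u_{n-1} = 0 is used. *)
Lemma cent_lead_coef_const A : cent A -> d (lead_coef A) = 0.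
Proof.
move=> LA; have [->|A0] := eqVneq A 0; first by rewrite lead_coef0 raddf0.
have sA := size_ord_op A0; set m := ord_op A in sA.
have [L1 sL1 LE] := normal_form_split; move: sL1 LE; case: n n_gt0 => // e _ /= sL1 LE.
have : ('X^(e.+1) ** A - A ** 'X^(e.+1) + (L1 ** A - A ** L1))`_(e + m) = 0.
  by rewrite addrACA -opprD -dmulDl -dmulDr -LE LA subrr coef0.
rewrite coefD coef_commXn // [X in _ + X]nth_default ?addr0; last first.
  apply: (leq_trans (size_polyD _ _)); rewrite size_polyN geq_max.
  by rewrite !(leq_trans (size_dmul_le _ _)) // sA ?addSn ?addnS /= ?(addnC m) leq_add2r.
by move/eqP; rewrite -mulr_natr mulf_eq0 (negbTE (charK e)) orbF => /eqP.
Qed.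

Section Approximation.
Variable P : {poly K}.
Hypotheses (P_cent : cent P) (P_neq0 : P != 0).
Hypothesis P_gen : forall X, cent X -> X != 0 ->
  exists2 k, (k < n)%N & ord_op X = (k * ord_op P)%N %[mod n].

Inductive in_CLP : {poly K} -> Prop :=
  | CLP0 : in_CLP 0
  | CLPD Q1 Q2 : in_CLP Q1 -> in_CLP Q2 -> in_CLP (Q1 + Q2)
  | CLPZ c a k : d c = 0 -> in_CLP (c *: (dpow d L a ** dpow d P k)).

Lemma in_CLP_cent Y Q : in_centralizer d Y L -> in_centralizer d Y P ->
  in_CLP Q -> in_centralizer d Y Q.
Proof.
move=> YL YP; elim => [|Q1 Q2 _ YQ1 _ YQ2|c a k dc]; first exact: cent0.
  exact: centD.
by apply: centZ_const => //; apply: centM; apply: centX.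
Qed.

(* Q = c L^a P^k with ord Q = ord X (possible by P_gen) and c a ratio of
   leading coefficients, a constant by cent_lead_coef_const. *)
Lemma cent_reduce X : cent X -> X != 0 -> (n * ord_op P <= ord_op X)%N ->
  exists2 Q, in_CLP Q & (size (X - Q)%R < size X)%N.
Proof.
move=> LX X0 le_nPX; have [k lt_kn Xk] := P_gen LX X0.
have le_kPX : (k * ord_op P <= ord_op X)%N.
  by apply: leq_trans le_nPX; rewrite leq_mul2r ltnW ?orbT.
pose a := ((ord_op X - k * ord_op P) %/ n)%N.
have aE : (a * n = ord_op X - k * ord_op P)%N.
  by apply: divnK; rewrite -eqn_mod_dvd // Xk.
pose M := dpow d L a ** dpow d P k.
have M0 : M != 0 by rewrite dmul_neq0 ?dpow_neq0 ?normal_form_neq0.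
have ordM : ord_op M = ord_op X.
  rewrite ord_dmul ?dpow_neq0 ?normal_form_neq0 // !ord_dpow ?normal_form_neq0 //.
  by rewrite normal_form_ord aE subnK.
have lM : lead_coef M = lead_coef P ^+ k.
  by rewrite lead_coef_dmul !lead_coef_dpow normal_form_lead expr1n mul1r.
pose c := lead_coef X / lead_coef M.
have dc : d c = 0.
  by rewrite der_constM ?der_constV ?lM ?der_constX ?cent_lead_coef_const.
exists (c *: M); first exact: CLPZ.
have c0 : c != 0 by rewrite mulf_neq0 ?invr_eq0 ?lead_coef_eq0.
apply: size_sub_same_lead => //; last by rewrite lead_coefZ divfK ?lead_coef_eq0.
by rewrite size_scale // !size_ord_op ?ordM.
Qed.

Lemma cent_approx X : cent X -> exists2 Q, in_CLP Q & (size (X - Q)%R <= n * ord_op P)%N.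
Proof.
have [m lt_Xm] := ubnP (size X); elim: m X lt_Xm => // m IHm X lt_Xm LX.
have [le_X|lt_X] := leqP (size X) (n * ord_op P).
  by exists 0; [exact: CLP0 | rewrite subr0].
have X0 : X != 0 by rewrite -size_poly_gt0 (leq_ltn_trans _ lt_X).
have le_nPX : (n * ord_op P <= ord_op X)%N by rewrite -ltnS -size_ord_op.
have [Q1 CLP_Q1 lt_Q1] := cent_reduce LX X0 le_nPX.
have LQ1 : cent Q1 by apply: in_CLP_cent.
have [Q2 CLP_Q2 le_Q2] := IHm (X - Q1) (leq_trans lt_Q1 lt_Xm) (centB LX LQ1).
by exists (Q2 + Q1); [exact: CLPD | rewrite opprD addrA addrAC].
Qed.

(* L^N [B, Y] = [L^N B - Q, Y] for Q in C[L, P]: the left side has order at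
   least N n, the right side order less than N, by cent_approx. *)
Lemma cent_commute_gen Y B : cent Y -> in_centralizer d Y P -> cent B ->
  in_centralizer d B Y.
Proof.
move=> LY YP LB; apply/eqP; rewrite -subr_eq0; apply/eqP.
pose N := (n * ord_op P + size Y)%N; pose LN := dpow d L N.
have [Q CLP_Q le_Q] := @cent_approx (LN ** B) (centM (centX N (erefl : cent L)) LB).
have YQ := in_CLP_cent (esym LY) YP CLP_Q.
have YLN : in_centralizer d Y LN := centX N (esym LY).
have key : LN ** (B ** Y - Y ** B) = (LN ** B - Q) ** Y - Y ** (LN ** B - Q).
  rewrite dmulBr [in RHS]dmulBl [in RHS]dmulBr YQ opprB addrA subrK.
  by rewrite [Y ** (_ ** _)]dmulA YLN -!dmulA.
have [//|D0] := eqVneq (B ** Y - Y ** B) 0.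
have : (size (LN ** (B ** Y - Y ** B)) <= N.-1)%N.
  rewrite key; apply: (leq_trans (size_polyD _ _)); rewrite size_polyN geq_max.
  by rewrite !(leq_trans (size_dmul_le _ _)) // /N; lia.
rewrite size_ord_op ?dmul_neq0 ?dpow_neq0 ?normal_form_neq0 //.
rewrite ord_dmul ?dpow_neq0 ?normal_form_neq0 // ord_dpow ?normal_form_neq0 //.
rewrite normal_form_ord; have := leq_pmulr N n_gt0; lia.
Qed.

End Approximation.

Variables (t : nat) (G : nat -> {poly K}).
Hypothesis Gbasis : goodearl_basis d n L t G.

Lemma goodearl_neq0 i : (i < t)%N -> G i != 0.
Proof.
move=> lt_it; apply/negP => /eqP Gi0; have [_ [_ [_ [Gindep _]]]] := Gbasis.
pose q j : {poly K} := if j == i then 1 else 0.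
have /(_ i lt_it) : forall j, (j < t)%N -> q j = 0.
  apply: Gindep => [j _ k|].
    by rewrite /q /is_const; case: ifP; rewrite ?coef1 ?coef0 ?der_nat ?raddf0.
  apply: big1 => j _; rewrite /q; case: eqP => [->|_]; first by rewrite Gi0 dmul0r.
  by rewrite /poly_in_L size_poly0 big_ord0 dmul0l.
by rewrite /q eqxx => /eqP; rewrite oner_eq0.
Qed.

(* The classes mod n of orders in C(L) are closed under addition, hence are
   the multiples of the least positive one; a Goodearl basis element realizes
   it, and finiteness of the basis makes the minimum computable. *)
Lemma cent_order_generator : exists P, [/\ cent P, P != 0 &
  forall X, cent X -> X != 0 ->
    exists2 k, (k < n)%N & ord_op X = (k * ord_op P)%N %[mod n]].
Proof.
have [t_gt0 [G0 [Gcent [_ [_ [_ [_ Gexh]]]]]]] := Gbasis.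
pose realized h := [exists j : 'I_t, ord_op (G j) == h %[mod n]].
have ex_h : exists h, (0 < h)%N && realized h.
  exists n; rewrite n_gt0; apply/existsP; exists (Ordinal t_gt0).
  by rewrite /= G0 /ord_op size_poly1 mod0n modnn.
have [h /andP[h_gt0 /existsP[j /eqP Gj]] h_min] := ex_minnP ex_h.
have LGj := Gcent j (ltn_ord j); have Gj0 := goodearl_neq0 (ltn_ord j).
exists (G j); split => // X LX X0.
pose r := (ord_op X %% n)%N; pose q := (r %/ h)%N.
have rE : r = (q * h + r %% h)%N := divn_eq r h.
have rh0 : (r %% h = 0)%N.
  apply/eqP; apply: contraT; rewrite -lt0n => rh_gt0.
  pose Y := X ** dpow d (G j) (n.-1 * q).
  have Y0 : Y != 0 by rewrite dmul_neq0 ?dpow_neq0.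
  have [j' lt_j't Yj'] := Gexh Y (centM LX (centX _ LGj)) Y0.
  have ordY : ord_op Y = r %% h %[mod n].
    rewrite ord_dmul ?dpow_neq0 // ord_dpow // -modnDml -/r.
    rewrite -modnDmr -modnMmr Gj modnMmr modnDmr.
    have -> : (r + n.-1 * q * h = q * h * n + r %% h)%N.
      by rewrite [in LHS]rE -[in RHS](prednK n_gt0) mulnS; nia.
    by rewrite modnMDl.
  have /h_min : (0 < r %% h)%N && realized (r %% h)%N.
    by rewrite rh_gt0; apply/existsP; exists (Ordinal lt_j't); rewrite /= -Yj' ordY.
  by rewrite leqNgt ltn_pmod.
exists q; first by rewrite (leq_ltn_trans (leq_div r h)) ?ltn_pmod.
by rewrite -modnMmr Gj modnMmr -[(q * h)%N]addn0 -rh0 -rE modn_mod.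
Qed.

Theorem cent_commutative A B : cent A -> cent B -> A ** B = B ** A.
Proof.
move=> LA LB; have [P [LP P0 Pgen]] := cent_order_generator.
have AP : in_centralizer d A P := cent_commute_gen LP P0 Pgen LP (erefl _) LA.
exact: esym (cent_commute_gen LP P0 Pgen LA AP LB).
Qed.

Lemma big_dmul_cent I (r : seq I) (F : I -> {poly K}) :
  (forall i, cent (F i)) -> cent (\big[dmul d/1]_(i <- r) F i).
Proof. by move=> LF; elim/big_ind: _ => //; [exact: cent1 | exact: centM]. Qed.

Lemma big_dmul_split I (r : seq I) (F1 F2 : I -> {poly K}) :
  (forall i, cent (F1 i)) -> (forall i, cent (F2 i)) ->
  \big[dmul d/1]_(i <- r) (F1 i ** F2 i) =
  (\big[dmul d/1]_(i <- r) F1 i) ** \big[dmul d/1]_(i <- r) F2 i.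
Proof.
move=> LF1 LF2; elim: r => [|i r IHr]; first by rewrite !big_nil dmul1l.
rewrite !big_cons IHr -!dmulA; congr (_ ** _); rewrite !dmulA; congr (_ ** _).
exact/cent_commutative/big_dmul_cent.
Qed.

(** * The Burchnall-Chaundy ideal *)

Local Notation bc_var := (@bc_var K L t G).
Local Notation phi := (@phiL K d L t G).
Local Notation J := (@diff_ideal_gen K d t (in_BC d L G)).
Implicit Types (p q r : {mpoly K[t]}) (m : 'X_{1..t}).

Definition bc_mono (m : 'X_{1..t}) : {poly K} :=
  \big[dmul d/1]_(i < t) dpow d (bc_var i) (m i).

Lemma bc_var_cent i : cent (bc_var i).
Proof.
have [_ [_ [Gcent _]]] := Gbasis.
by rewrite /bc_var; case: ifP => _; [exact: erefl | exact: Gcent (ltn_ord i)].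
Qed.

Lemma bc_mono_cent m : cent (bc_mono m).
Proof. by apply: big_dmul_cent => i; apply/centX/bc_var_cent. Qed.

Lemma bc_mono0 : bc_mono 0 = 1.
Proof. by apply: big1 => i _; rewrite mnm0E. Qed.

Lemma bc_monoD m1 m2 : bc_mono (m1 + m2) = bc_mono m1 ** bc_mono m2.
Proof.
rewrite -big_dmul_split => [|i|i]; try exact/centX/bc_var_cent.
by apply: eq_bigr => i _; rewrite mnmDE dpowD.
Qed.

Lemma bc_monoU i k : bc_mono (U_(i) *+ k) = dpow d (bc_var i) k.
Proof.
rewrite /bc_mono (eq_bigr (fun j => if j == i then dpow d (bc_var i) k else 1)).
  by rewrite -big_mkcond big_pred1_eq.
by move=> j _; rewrite mulmnE mnm1E eq_sym; case: eqP => [->|]; rewrite ?mul1n.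
Qed.

Lemma phi_over p (s : seq 'X_{1..t}) : uniq s -> {subset msupp p <= s} ->
  phi p = \sum_(m <- s) p@_m *: bc_mono m.
Proof.
move=> s_uniq sub_ps; rewrite [RHS](bigID (mem (msupp p))) /=.
rewrite [X in _ = _ + X]big1 ?addr0 => [|m /memN_msupp_eq0 ->]; last exact: scale0r.
rewrite -big_filter; apply: perm_big; apply: uniq_perm; rewrite ?filter_uniq ?msupp_uniq //.
by move=> m; rewrite mem_filter; case: (boolP (m \in msupp p)) => // /(sub_ps m) ->.
Qed.

Lemma phi_is_linear : linear phi.
Proof.
move=> c p q; pose s := undup (msupp (c *: p + q) ++ msupp p ++ msupp q).
have s_uniq : uniq s := undup_uniq _.
have sub1 : {subset msupp (c *: p + q) <= s} by move=> m; rewrite mem_undup mem_cat => ->.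
have sub2 : {subset msupp p <= s} by move=> m; rewrite mem_undup !mem_cat => ->; rewrite orbT.
have sub3 : {subset msupp q <= s} by move=> m; rewrite mem_undup !mem_cat => ->; rewrite !orbT.
rewrite (phi_over s_uniq sub1) (phi_over s_uniq sub2) (phi_over s_uniq sub3).
rewrite scaler_sumr -big_split; apply: eq_bigr => m _.
by rewrite mcoeffD mcoeffZ scalerDl scalerA.
Qed.

HB.instance Definition _ := GRing.isLinear.Build K {mpoly K[t]} {poly K} *:%R phi
  phi_is_linear.

Lemma phiX m : phi 'X_[m] = bc_mono m.
Proof. by rewrite /phiL msuppX big_seq1 mcoeffX eqxx scale1r. Qed.

Lemma phi1 : phi 1 = 1.
Proof. by rewrite -mpolyX0 phiX bc_mono0. Qed.

Lemma phiMX p m : phi (p * 'X_[m]) = phi p ** bc_mono m.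
Proof.
rewrite {1}(mpolyE p) mulr_suml linear_sum [in RHS](mpolyE p) linear_sum dmul_suml.
apply: eq_bigr => u _; rewrite -scalerAl -mpolyXD !linearZ /= dmulZl.
by rewrite !phiX bc_monoD.
Qed.

Lemma phiM_eq0 r p : phi p = 0 -> phi (r * p) = 0.
Proof.
move=> phi_p0; rewrite mulrC (mpolyE r) mulr_sumr linear_sum big1 // => m _.
by rewrite -scalerAr linearZ /= phiMX phi_p0 dmul0l scaler0.
Qed.

Let t_gt0 : (0 < t)%N := Gbasis.1.
Let lam : 'I_t := Ordinal t_gt0.

(* The exponent of λ^k μ_s, with the convention μ_0 = 1 matching G_0 = 1. *)
Definition std_mono k (s : 'I_t) : 'X_{1..t} := (U_(lam) *+ k + U_(s) *+ (val s != 0%N))%MM.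

Definition std_poly (b : 'I_t -> {poly K}) : {mpoly K[t]} :=
  \sum_(s < t) pcomb (fun k => 'X_[std_mono k s]) (b s).

Definition std_image A (b : 'I_t -> {poly K}) : {poly K} :=
  \sum_(s < t) pcomb (fun k => A ** (dpow d L k ** G s)) (b s).

Lemma bc_mono_std k s : bc_mono (std_mono k s) = dpow d L k ** G s.
Proof.
have [_ [G0 _]] := Gbasis.
rewrite bc_monoD !bc_monoU /bc_var /=; congr (_ ** _).
by case: s => [[|s] lt_st]; rewrite /dpow /= ?G0 ?dmul1r.
Qed.

Lemma phi_mul_std r b : phi (r * std_poly b) = std_image (phi r) b.
Proof.
rewrite mulr_sumr linear_sum; apply: eq_bigr => s _.
rewrite /pcomb mulr_sumr linear_sum; apply: eq_bigr => k _.
by rewrite -scalerAr linearZ /= phiMX bc_mono_std.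
Qed.

Lemma phi_std b : phi (std_poly b) = std_image 1 b.
Proof. by rewrite -[std_poly b]mul1r phi_mul_std phi1. Qed.

Lemma std_image1 b : std_image 1 b = \sum_(s < t) poly_in_L d L (b s) ** G s.
Proof.
apply: eq_bigr => s _; rewrite /poly_in_L dmul_suml.
by apply: eq_bigr => k _; rewrite dmulZl dmul1l.
Qed.

Lemma std_polyD b1 b2 : std_poly (fun s => b1 s + b2 s) = std_poly b1 + std_poly b2.
Proof. by rewrite -big_split; apply: eq_bigr => s _; apply: linearD. Qed.

Lemma std_polyZ c b : std_poly (fun s => c *: b s) = c *: std_poly b.
Proof. by rewrite scaler_sumr; apply: eq_bigr => s _; apply: linearZ. Qed.

Lemma std_poly_eq0 b : (forall s, b s = 0) -> std_poly b = 0.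
Proof. by move=> b0; apply: big1 => s _; rewrite b0 linear0. Qed.

Lemma std_poly_const b : (forall s, const_poly d (b s)) -> forall m, d (std_poly b)@_m = 0.
Proof.
move=> bC m; rewrite raddf_sum raddf_sum big1 // => s _.
rewrite /pcomb raddf_sum raddf_sum big1 //= => k _.
by rewrite mcoeffZ mcoeffX der_constM ?der_nat ?bC.
Qed.

Inductive bc_span : {mpoly K[t]} -> Prop :=
  | bc_span0 : bc_span 0
  | bc_spanD p q : bc_span p -> bc_span q -> bc_span (p + q)
  | bc_spanZ c p : in_BC d L G p -> bc_span (c *: p).

Lemma bc_span_mderivK p : bc_span p -> bc_span (mderivK d p).
Proof.
elim => [|p1 p2 _ IH1 _ IH2|c p' BCp].
- by rewrite mderivK0; exact: bc_span0.
- by rewrite mderivKD; exact: bc_spanD.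
by rewrite mderivKZ mderivK_const ?scaler0 ?addr0; [exact: bc_spanZ | case: BCp].
Qed.

Lemma phi_bc_span p : bc_span p -> phi p = 0.
Proof.
elim => [|p1 p2 _ phi1 _ phi2|c p' [_ phi_p']]; first exact: linear0.
  by rewrite linearD /= phi1 phi2 addr0.
by rewrite linearZ /= phi_p' scaler0.
Qed.

Lemma phi_mul_bc_span r p q : bc_span (p - q) -> phi (r * p) = phi (r * q).
Proof.
move=> span_pq; apply/eqP; rewrite -subr_eq0 -linearB /= -mulrBr.
exact/eqP/phiM_eq0/phi_bc_span.
Qed.

Lemma bc_span_J p : bc_span p -> J p.
Proof.
move=> span_p I [I0 ID IM] _ IBC; elim: span_p => [|p1 p2 _ I1 _ I2|c p' BCp] //.
  exact: ID.
by rewrite -mul_mpolyC; apply/IM/IBC.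
Qed.

(* For a monomial u, φ(u) lies in C(L) = Σ_s C[L] G_s, so u - std_poly q is
   in BC(L) for suitable constant q. *)
Lemma std_reduce p : exists b, bc_span (p - std_poly b).
Proof.
have [_ [_ [_ [_ [Ggen _]]]]] := Gbasis.
rewrite (mpolyE p); elim/big_ind: _ => [|p1 p2 [b1 span1] [b2 span2]|m _].
- by exists (fun=> 0); rewrite std_poly_eq0 // subr0; exact: bc_span0.
- by exists (fun s => b1 s + b2 s); rewrite std_polyD opprD addrACA; exact: bc_spanD.
have [q [qC qE]] := Ggen _ (bc_mono_cent m).
exists (fun s : 'I_t => p@_m *: q s); rewrite std_polyZ -scalerBr.
apply: bc_spanZ; split => [u|].
  rewrite /is_const mcoeffB mcoeffX raddfB /= der_nat std_poly_const ?subrr // => s.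
  exact: qC.
by rewrite linearB /= phiX phi_std std_image1 qE subrr.
Qed.

(* The orders of A L^k G_s are ord A + k n + ord G_s, pairwise distinct since
   the ord G_s lie in distinct classes mod n. *)
Lemma std_image_eq0 A b : A != 0 -> std_image A b = 0 -> forall s, b s = 0.
Proof.
have [_ [_ [_ [_ [_ [_ [Gdist _]]]]]]] := Gbasis.
move=> A0 Ab0 s; pose N := (\max_(s < t) size (b s))%N.
pose T (s : 'I_t) (k : 'I_N) := A ** (dpow d L k ** G s).
have LkG0 (s' : 'I_t) k : dpow d L k ** G s' != 0.
  by rewrite dmul_neq0 ?dpow_neq0 ?normal_form_neq0 ?goodearl_neq0.
have T0 (x : 'I_t * 'I_N) : T x.1 x.2 != 0 by rewrite dmul_neq0.
have Tinj : injective (fun x : 'I_t * 'I_N => size (T x.1 x.2)).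
  move=> [s1 k1] [s2 k2] /=; rewrite !size_ord_op ?(T0 (_, _)) // => /succn_inj.
  rewrite /T !ord_dmul ?LkG0 ?dpow_neq0 ?normal_form_neq0 ?goodearl_neq0 //=.
  rewrite !ord_dpow ?normal_form_neq0 // normal_form_ord => /addnI E.
  have s12 : s1 = s2.
    apply/val_inj/(Gdist _ _ (ltn_ord s1) (ltn_ord s2)).
    by move/(congr1 (modn^~ n)): E; rewrite !modnMDl.
  subst s2; congr pair; apply/val_inj/eqP.
  by move/addIn/eqP: E; rewrite eqn_pmul2r.
have /(distinct_size_free T0 Tinj) bT0 :
    \sum_(x : 'I_t * 'I_N) (b x.1)`_x.2 *: T x.1 x.2 = 0.
  rewrite -[RHS]Ab0 /std_image (eq_bigr (fun s' => \sum_(k < N) (b s')`_k *: T s' k)).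
    by rewrite pair_bigA.
  by move=> s' _; rewrite (@pcomb_widen _ _ _ _ N) // (leq_bigmax s').
apply/polyP => k; rewrite coef0; case: (ltnP k N) => [lt_kN|le_Nk].
  exact: (bT0 (s, Ordinal lt_kN)).
by rewrite nth_default //; apply: leq_trans le_Nk; exact: leq_bigmax.
Qed.

Lemma phi_eq0_bc_span p : phi p = 0 -> bc_span p.
Proof.
move=> phi_p0; have [b span_pb] := std_reduce p.
have /(std_image_eq0 (oner_neq0 _)) b0 : std_image 1 b = 0.
  by rewrite -phi_std -[std_poly b]mul1r -(phi_mul_bc_span _ span_pb) mul1r.
by rewrite std_poly_eq0 // subr0 in span_pb.
Qed.

Lemma J_phi_eq0 p : J p -> phi p = 0.
Proof.
move=> Jp; apply: (Jp (fun q => phi q = 0)); last by move=> q [].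
- split => [|q r phi_q phi_r|r q /phiM_eq0 //]; first exact: linear0.
  by rewrite linearD /= phi_q phi_r addr0.
- by move=> q /phi_eq0_bc_span/bc_span_mderivK/phi_bc_span.
Qed.

Lemma bc_diff_idealP p : J p <-> phi p = 0.
Proof. by split=> [|/phi_eq0_bc_span/bc_span_J]; [exact: J_phi_eq0 |]. Qed.

Lemma phi_mul_eq0 a b : phi (a * b) = 0 -> phi a = 0 \/ phi b = 0.
Proof.
move=> phi_ab0; have [phi_a0|phi_a0] := eqVneq (phi a) 0; [by left | right].
have [c span_bc] := std_reduce b.
have /(std_image_eq0 phi_a0) c0 : std_image (phi a) c = 0.
  by rewrite -phi_mul_std -(phi_mul_bc_span _ span_bc).
by apply: phi_bc_span; rewrite std_poly_eq0 // subr0 in span_bc.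
Qed.

End Centralizer.

End DifferentialField.

Theorem theorem6p3 (K : fieldType) (d : K -> K) (n : nat) (L : {poly K})
    (t : nat) (G : nat -> {poly K}) :
  is_derivation d -> const_alg_closed d -> char_zero K ->
  (0 < n)%N -> normal_form n L ->
  goodearl_basis d n L t G ->
  let J := @diff_ideal_gen K d t (in_BC d L G) in
  [/\ ~ J 1,
      (forall a b, J (a * b) -> J a \/ J b) &
      (forall a, J a -> J (mderivK d a))].
Proof.
move=> derd _ charK n_gt0 Lnf Gbasis J.
have JE := bc_diff_idealP derd charK n_gt0 Lnf Gbasis.
split=> [|a b /JE/(phi_mul_eq0 derd charK n_gt0 Lnf Gbasis) []|a Ja I Iideal Ider IBC].
- by move/JE; rewrite (phi1 derd charK) => /eqP; rewrite oner_eq0.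
- by move/JE; left.
- by move/JE; right.
- exact: Ider _ (Ja I Iideal Ider IBC).
Qed.
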